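(* Let $\lambda$ be a nonzero real number and $x$ a real number with $1+\lambda x>0$. Then for every integer $n\ge0$, \[ \mathrm{Bel}_{n+1,\lambda}(x)=x\sum_{l=0}^{n}\binom{n}{l}\big(\mathrm{Bel}_{l,\lambda}(x)-\lambda\,\mathrm{Bel}_{l+1,\lambda}(x)\big). \]
   Context: For nonzero real $\lambda$, $e_\lambda(x)=(1+\lambda x)^{1/\lambda}$ and $e_\lambda^{-1}(x)=(1+\lambda x)^{-1/\lambda}$. The new type degenerate Bell polynomials $\mathrm{Bel}_{n,\lambda}(x)$ are defined by $e_{\lambda}(xe^{t})\,e_{\lambda}^{-1}(x)=\big(\frac{1+\lambda xe^t}{1+\lambda x}\big)^{1/\lambda}=\sum_{n=0}^{\infty}\mathrm{Bel}_{n,\lambda}(x)\frac{t^{n}}{n!}$ (expansion in powers of $t$). *)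

From Stdlib Require Import Reals.
From Coquelicot Require Import Coquelicot.
Open Scope R_scope.

(* Generating function t |-> e_lam(x e^t) e_lam^{-1}(x) = ((1+lam x e^t)/(1+lam x))^(1/lam). *)
Definition bel_gf (lam x : R) (t : R) : R :=
  Rpower ((1 + lam * x * exp t) / (1 + lam * x)) (1 / lam).

(* Bel_{n,lam}(x) = n! * [t^n] of the generating function = n-th derivative at t = 0. *)
Definition Bel (n : nat) (lam x : R) : R := Derive_n (bel_gf lam x) n 0.

(** The generating function [F t = ((1 + lam x e^t) / (1 + lam x))^(1/lam)]
    satisfies [F' = x e^t F / (1 + lam x e^t)], i.e. [F' = x e^t (F - lam F')].
    Differentiating [n] times with the Leibniz rule, and using that every
    derivative of [x e^t] is [x e^t] itself, gives
    [F^(n+1) = x e^t sum_l C(n,l) (F^(l) - lam F^(l+1))]; evaluate at [t = 0].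
    That [F] is infinitely differentiable follows because the derivatives of
    [exp], [1 / (1 + lam x e^t)] and [F] all lie in the algebra they generate. *)

From Stdlib Require Import Reals Lra Lia.
From Coquelicot Require Import Coquelicot.
Open Scope R_scope.

Lemma binomial_sum_pascal (a : nat -> R) (k : nat) :
  sum_f_R0 (fun l => Binomial.C k l * (a l + a (S l))) k =
  sum_f_R0 (fun l => Binomial.C (S k) l * a l) (S k).
Proof.
  destruct k as [|k].
  { simpl. rewrite !C_n_0, C_n_n. ring. }
  rewrite (decomp_sum _ (S (S k))) by lia; simpl Init.Nat.pred.
  rewrite (tech5 (fun i => Binomial.C (S (S k)) (S i) * a (S i)) k).
  rewrite (sum_eq (fun i => Binomial.C (S (S k)) (S i) * a (S i))
    (fun i => Binomial.C (S k) i * a (S i) + Binomial.C (S k) (S i) * a (S i)))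
    by (intros i Hi; rewrite <- pascal by lia; ring).
  rewrite (sum_eq (fun l => Binomial.C (S k) l * (a l + a (S l)))
    (fun l => Binomial.C (S k) l * a l + Binomial.C (S k) l * a (S l)))
    by (intros; ring).
  rewrite !plus_sum, (decomp_sum (fun l => Binomial.C (S k) l * a l) (S k)) by lia.
  simpl Init.Nat.pred.
  rewrite (tech5 (fun l => Binomial.C (S k) l * a (S l)) k), !C_n_0, !C_n_n.
  ring.
Qed.

Lemma is_derive_sum_f_R0 (h : nat -> R -> R) (h' : nat -> R) (t : R) (k : nat) :
  (forall l, (l <= k)%nat -> is_derive (h l) t (h' l)) ->
  is_derive (fun s => sum_f_R0 (fun l => h l s) k) t (sum_f_R0 h' k).
Proof.
  intros Hh. rewrite <- sum_n_Reals.
  apply (is_derive_ext (fun s => sum_n (fun l => h l s) k)).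
  { intros s. apply sum_n_Reals. }
  exact (is_derive_sum_n h k t h' Hh).
Qed.

(* Inductive step of the Leibniz rule for [(u * a_0)^(k)] when [u' = u] and [a_l' = a_(l+1)]. *)
Lemma is_derive_mul_binomial_sum (u : R -> R) (a : nat -> R -> R) (t : R) (k : nat) :
  is_derive u t (u t) ->
  (forall l, is_derive (a l) t (a (S l) t)) ->
  is_derive (fun s => u s * sum_f_R0 (fun l => Binomial.C k l * a l s) k) t
    (u t * sum_f_R0 (fun l => Binomial.C (S k) l * a l t) (S k)).
Proof.
  intros Hu Ha.
  assert (Hsum : is_derive (fun s => sum_f_R0 (fun l => Binomial.C k l * a l s) k) t
                   (sum_f_R0 (fun l => Binomial.C k l * a (S l) t) k)).
  { apply (is_derive_sum_f_R0 (fun l s => Binomial.C k l * a l s)).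
    intros l _. apply is_derive_scal, Ha. }
  rewrite <- binomial_sum_pascal.
  rewrite (sum_eq (fun l => Binomial.C k l * (a l t + a (S l) t))
    (fun l => Binomial.C k l * a l t + Binomial.C k l * a (S l) t))
    by (intros; ring).
  rewrite plus_sum, Rmult_plus_distr_l.
  apply (is_derive_mult u _ t _ _ Hu Hsum). intros; apply Rmult_comm.
Qed.

Section BellGeneratingFunction.

Variables lam x : R.
Hypothesis hlam : lam <> 0.
Hypothesis hx : 0 < 1 + lam * x.

Let F := bel_gf lam x.
Let D := Derive_n F.

(* Outside [U] the base of the [Rpower] defining [F] is not positive,
   so [F] takes junk values there. *)
Let U (t : R) : Prop := 0 < 1 + lam * x * exp t.

Lemma U_0 : U 0.
Proof. unfold U. rewrite exp_0, Rmult_1_r. exact hx. Qed.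

Lemma U_locally (t : R) : U t -> locally t U.
Proof.
  intros Ht.
  assert (Hc : continuity_pt (fun s => 1 + lam * x * exp s) t).
  { apply derivable_continuous_pt. reg. }
  apply continuity_pt_locally
    with (eps := mkposreal _ (Rdiv_lt_0_compat _ 2 Ht ltac:(lra))) in Hc.
  eapply filter_imp; [|exact Hc]. simpl. intros s Hs.
  apply Rabs_def2 in Hs. unfold U. lra.
Qed.

Let Y (t : R) : R := / (1 + lam * x * exp t).

Lemma is_derive_gf (t : R) : U t -> is_derive F t (x * exp t * (Y t * F t)).
Proof.
  intros Ht. unfold U in Ht. unfold F, Y, bel_gf, Rpower. auto_derive.
  - apply Rdiv_lt_0_compat; lra.
  - unfold Rdiv. field. split; lra.
Qed.

Lemma Derive_gf (t : R) : U t -> Derive F t = x * exp t * (F t - lam * Derive F t).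
Proof.
  intros Ht. rewrite (is_derive_unique _ _ _ (is_derive_gf t Ht)).
  unfold U in Ht. unfold Y. field. lra.
Qed.

Inductive gf_algebra : (R -> R) -> Prop :=
  | gf_algebra_const c : gf_algebra (fun _ => c)
  | gf_algebra_exp : gf_algebra exp
  | gf_algebra_Y : gf_algebra Y
  | gf_algebra_F : gf_algebra F
  | gf_algebra_plus f g :
      gf_algebra f -> gf_algebra g -> gf_algebra (fun t => f t + g t)
  | gf_algebra_mult f g :
      gf_algebra f -> gf_algebra g -> gf_algebra (fun t => f t * g t).

Lemma gf_algebra_derive (f : R -> R) : gf_algebra f ->
  exists f', gf_algebra f' /\ forall t, U t -> is_derive f t (f' t).
Proof.
  induction 1 as [c| | | |f g _ [f' [Af' Hf']] _ [g' [Ag' Hg']]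
                            |f g Af [f' [Af' Hf']] Ag [g' [Ag' Hg']]].
  - exists (fun _ => 0). split; [constructor|]. intros t _. auto_derive; auto.
  - exists exp. split; [constructor|]. intros t _. apply is_derive_exp.
  - exists (fun t => - lam * x * (exp t * (Y t * Y t))).
    split; [repeat constructor|].
    intros t Ht. unfold U in Ht. unfold Y. auto_derive; [lra|]. field. lra.
  - exists (fun t => x * exp t * (Y t * F t)).
    split; [repeat constructor|]. exact is_derive_gf.
  - exists (fun t => f' t + g' t). split; [now constructor|].
    intros t Ht. apply (is_derive_plus f g); auto.
  - exists (fun t => f' t * g t + f t * g' t).
    split; [repeat constructor; assumption|].
    intros t Ht. apply (is_derive_mult f g); auto. intros; apply Rmult_comm.
Qed.

Lemma Derive_n_gf_algebra (k : nat) :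
  exists g, gf_algebra g /\ forall t, U t -> D k t = g t.
Proof.
  induction k as [|k [g [Ag Hg]]].
  { exists F. split; [constructor|]. reflexivity. }
  destruct (gf_algebra_derive g Ag) as [g' [Ag' Hg']].
  exists g'. split; [exact Ag'|]. intros t Ht.
  change (D (S k) t) with (Derive (D k) t).
  rewrite (Derive_ext_loc _ g).
  - exact (is_derive_unique _ _ _ (Hg' t Ht)).
  - exact (filter_imp _ _ Hg (U_locally t Ht)).
Qed.

Lemma is_derive_Derive_n_gf (k : nat) (t : R) : U t ->
  is_derive (D k) t (D (S k) t).
Proof.
  intros Ht. destruct (Derive_n_gf_algebra k) as [g [Ag Hg]].
  destruct (gf_algebra_derive g Ag) as [g' [_ Hg']].
  assert (Hloc : locally t (fun s => g s = D k s)).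
  { apply (filter_imp U); [|exact (U_locally t Ht)]. intros; symmetry; auto. }
  pose proof (is_derive_ext_loc g _ t _ Hloc (Hg' t Ht)) as Hd.
  change (D (S k) t) with (Derive (D k) t).
  rewrite (is_derive_unique _ _ _ Hd). exact Hd.
Qed.

Lemma Derive_n_gf_recurrence (k : nat) (t : R) : U t ->
  D (S k) t = x * exp t *
    sum_f_R0 (fun l => Binomial.C k l * (D l t - lam * D (S l) t)) k.
Proof.
  revert t. induction k as [|k IHk]; intros t Ht.
  { simpl. rewrite C_n_0, Rmult_1_l. exact (Derive_gf t Ht). }
  change (D (S (S k)) t) with (Derive (D (S k)) t).
  rewrite (Derive_ext_loc _ _ t (filter_imp _ _ IHk (U_locally t Ht))).
  apply is_derive_unique.
  apply (is_derive_mul_binomial_sum (fun s => x * exp s)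
           (fun l s => D l s - lam * D (S l) s)).
  - apply (is_derive_scal exp t x), is_derive_exp.
  - intros l.
    exact (is_derive_minus _ _ t _ _ (is_derive_Derive_n_gf l t Ht)
             (is_derive_scal _ t lam _ (is_derive_Derive_n_gf (S l) t Ht))).
Qed.

End BellGeneratingFunction.

Theorem theorem8 (lam x : R) (n : nat) (hlam : lam <> 0) (hx : 0 < 1 + lam * x) :
  Bel (S n) lam x =
  x * sum_f_R0 (fun l => Binomial.C n l * (Bel l lam x - lam * Bel (S l) lam x)) n.
Proof.
  unfold Bel.
  rewrite (Derive_n_gf_recurrence lam x hlam hx n 0 (U_0 lam x hx)).
  rewrite exp_0, Rmult_1_r. reflexivity.
Qed.
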